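(* Let $N\ge2$. Then there exist a unital complex algebra $A$ and $F\in\mathcal G_N^{dif}(A)$ such that if $G,H\in\mathcal G_N^{dif}(A)$ satisfy $(G\circ F)^j(z)=z_j$ and $(F\circ H)^j(z)=z_j$ for all $j$, then $G\neq H$; that is, the left and right substitutional inverses of a power series are in general distinct.
   Context: Let $A$ be a unital complex algebra and $z_1,\dots,z_N$ non-commuting variables commuting with elements of $A$; for a word $w=w(1)\cdots w(p)$ over $\{1,\dots,N\}$ put $z_w=z_{w(1)}\cdots z_{w(p)}$. $\mathcal G_N^{dif}(A)$ is the set of $N$-tuples $F=(F^1,\dots,F^N)$ of formal power series $F^j(z)=z_j+\sum_{|u|\ge2}f_u^jz_u$, $f_u^j\in A$; put $f_k^j=\delta_{jk}$. Substitution: $(F\circ G)^i(z)=\sum_w f_w^i\,G^{w(1)}(z)\cdots G^{w(q)}(z)$, the sum over nonempty words $w$ with $q=|w|$. *)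

From HB Require Import structures.
From mathcomp Require Import all_boot all_order all_algebra.
From mathcomp Require Import Rstruct.
From mathcomp Require Import complex.
Set Implicit Arguments. Unset Strict Implicit. Unset Printing Implicit Defensive.
Import Order.TTheory GRing.Theory Num.Theory.
Local Open Scope ring_scope.

Definition Cplx : fieldType := (Rdefinitions.R)[i].

(* A formal power series in N non-commuting variables z_0,...,z_{N-1}
   (commuting with A) is given by its coefficient function on words:
   s u is the coefficient of z_u.  An N-tuple of series is a function
   'I_N -> (seq 'I_N -> A), F j = F^j. *)
Definition series_tuple (N : nat) (A : Type) := 'I_N -> seq 'I_N -> A.

Definition Gdif (N : nat) (A : nzRingType) (F : series_tuple N A) : Prop :=
  forall j : 'I_N,
    F j [::] = 0 /\ (forall k : 'I_N, F j [:: k] = (j == k)%:R).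

(* Coefficient of z_v in the product G^{w(1)} ... G^{w(q)} of series
   (variables commute with coefficients, so (a z_u)(b z_u') = ab z_{uu'}). *)
Fixpoint prod_coef (N : nat) (A : nzRingType) (G : series_tuple N A)
    (w : seq 'I_N) (v : seq 'I_N) : A :=
  match w with
  | [::] => if v == [::] then 1 else 0
  | j :: w' => \sum_(k < (size v).+1) G j (take k v) * prod_coef G w' (drop k v)
  end.

(* Substitution (F o G)^i = sum_{w nonempty} f^i_w G^{w(1)} ... G^{w(q)}.  When G has zero constant terms (as for G in Gdif),
   the product G^{w(1)}...G^{w(q)} has no terms of degree < q, so only
   words w with 1 <= |w| <= |v| contribute to z_v; the sum is finite. *)
Definition subst (N : nat) (A : nzRingType) (F G : series_tuple N A)
  : series_tuple N A :=
  fun i v => \sum_(1 <= q < (size v).+1) \sum_(t : q.-tuple 'I_N)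
               F i (tval t) * prod_coef G (tval t) v.

Definition id_series (N : nat) (A : nzRingType) : series_tuple N A :=
  fun j v => if v == [:: j] then 1 else 0.

From HB Require Import structures.
From mathcomp Require Import all_boot all_order all_algebra zify.
Set Implicit Arguments. Unset Strict Implicit. Unset Printing Implicit Defensive.
Import GRing.Theory.
Local Open Scope ring_scope.

(* Take F^j = z_j + c_j z_0 z_j.  If G were both a left and a right inverse
   of F, the right-inverse equations G^j + c_j G^0 G^j = z_j would determine
   the coefficients of G on the words 0^k j, while the left-inverse equation
   G(F) = z at the word 0 0 0 i only involves the coefficients of G^i on the
   words 0 0 0 i, 0 0 i and 0 i.  Substituting the former into the latter
   gives c_i c_i c_0 = c_i c_0 c_i, which fails for the matrix units
   c_0 = E_01 and c_i = E_00 of M_2(C). *)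

Lemma sum_tupleS (V : nmodType) (I : finType) q (f : q.+1.-tuple I -> V) :
  \sum_(t : q.+1.-tuple I) f t = \sum_(x : I) \sum_(t : q.-tuple I) f (cons_tuple x t).
Proof.
rewrite pair_big /= (reindex (fun p : I * q.-tuple I => cons_tuple p.1 p.2)) //=.
exists (fun t : q.+1.-tuple I => (thead t, behead_tuple t)).
  by move=> [x t] _; congr pair; apply: val_inj.
by move=> t _; apply: val_inj; rewrite /= [in RHS](tuple_eta t).
Qed.

Lemma sum_tuple0 (V : nmodType) (I : finType) (f : 0.-tuple I -> V) :
  \sum_(t : 0.-tuple I) f t = f [tuple].
Proof. by rewrite (big_pred1 [tuple]) // => t; rewrite [t]tuple0 /= eqxx. Qed.

Lemma sum_if_eq (V : nmodType) (I : finType) (i : I) (f : I -> V) :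
  \sum_(j : I) (if j == i then f j else 0) = f i.
Proof. by rewrite -big_mkcond big_pred1_eq. Qed.

Section Coefficients.

Variables (N : nat) (A : nzRingType).
Implicit Types (F G : series_tuple N A) (P : seq 'I_N -> A) (t v : seq 'I_N).

(* The coefficient of z_v in P(G^1(z), ..., G^N(z)), provided the G^j have no
   constant term. *)
Definition comp_coef P G v :=
  \sum_(0 <= q < (size v).+1) \sum_(t : q.-tuple 'I_N) P t * prod_coef G t v.

Lemma subst_comp_coef F G i v :
  F i [::] = 0 -> subst F G i v = comp_coef (F i) G v.
Proof.
by move=> F0; rewrite /comp_coef big_ltn // sum_tuple0 /= F0 mul0r add0r.
Qed.

Lemma prod_coef_cons G j t v :
  prod_coef G (j :: t) v =
  \sum_(k < (size v).+1) G j (take k v) * prod_coef G t (drop k v).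
Proof. by []. Qed.

Lemma prod_coef1 G j v : prod_coef G [:: j] v = G j v.
Proof.
rewrite /= big_ord_recr /= take_size drop_size eqxx mulr1 big1 ?add0r // => k _.
by rewrite -size_eq0 size_drop subn_eq0 leqNgt ltn_ord mulr0.
Qed.

Lemma comp_coef_nil P G : comp_coef P G [::] = P [::].
Proof. by rewrite /comp_coef big_nat1 sum_tuple0 mulr1. Qed.

Section ConstantFree.

Variable G : series_tuple N A.
Hypothesis G0 : forall j, G j [::] = 0.

Lemma prod_coef_small t v : (size v < size t)%N -> prod_coef G t v = 0.
Proof.
elim: t v => [|x t IHt] v; first by rewrite ltn0.
move=> /= ltvt; apply: big1 => -[[|k] /= ltkv] _.
  by rewrite take0 G0 mul0r.
by rewrite IHt ?mulr0 // size_drop; lia.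
Qed.

Lemma comp_coef_widen P v m : (size v < m)%N ->
  comp_coef P G v = \sum_(0 <= q < m) \sum_(t : q.-tuple 'I_N) P t * prod_coef G t v.
Proof.
move=> ltvm; rewrite /comp_coef (big_nat_widen _ _ m) // big_mkcond.
apply: eq_bigr => q _; case: ltnP => // leq; rewrite big1 // => t _.
by rewrite prod_coef_small ?mulr0 // size_tuple.
Qed.

Lemma subst_quadratic F i v :
  F i [::] = 0 -> (forall w, (2 < size w)%N -> F i w = 0) ->
  subst F G i v = \sum_j F i [:: j] * G j v +
    \sum_j \sum_l F i [:: j; l] *
      \sum_(k < (size v).+1) G j (take k v) * G l (drop k v).
Proof.
move=> F0 F2; rewrite subst_comp_coef // (@comp_coef_widen _ _ (size v).+3); last lia.
rewrite !big_nat_recl // [X in _ + (_ + (_ + X))]big1 ?addr0 => [|q _]; last first.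
  by apply: big1 => t _; rewrite F2 ?mul0r // size_tuple.
rewrite sum_tuple0 F0 mul0r add0r !sum_tupleS.
congr (_ + _); apply: eq_bigr => j _; first by rewrite sum_tuple0 prod_coef1.
rewrite sum_tupleS; apply: eq_bigr => l _; rewrite sum_tuple0.
by rewrite prod_coef_cons !mulr_sumr; apply: eq_bigr => k _; rewrite prod_coef1 mulrA.
Qed.

End ConstantFree.

Section QuadraticInner.

Variable Q : series_tuple N A.
Hypotheses (Q0 : forall j, Q j [::] = 0) (Q1 : forall j k, Q j [:: k] = (j == k)%:R)
  (Q2 : forall j w, (2 < size w)%N -> Q j w = 0).

Lemma comp_coef1 P y : comp_coef P Q [:: y] = P [:: y].
Proof.
rewrite /comp_coef big_nat_recl // big_nat1 sum_tuple0 mulr0 add0r sum_tupleS.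
rewrite -(sum_if_eq y (fun x => P [:: x])); apply: eq_bigr => x _.
rewrite sum_tuple0 prod_coef1 Q1.
by case: (x =P y) => [->|_]; rewrite ?mulr1 ?mulr0.
Qed.

Lemma prod_coef_cons2 x t y z v :
  prod_coef Q (x :: t) [:: y, z & v] =
  (x == y)%:R * prod_coef Q t (z :: v) + Q x [:: y; z] * prod_coef Q t v.
Proof.
rewrite prod_coef_cons !big_ord_recl big1 ?addr0 => [|k _]; rewrite !lift0 /=.
  by rewrite take0 Q0 mul0r add0r Q1 drop0.
by rewrite Q2 ?mul0r //; case: v k => [[]|].
Qed.

Lemma comp_coef_cons2 P y z v :
  comp_coef P Q [:: y, z & v] = comp_coef (fun t => P (y :: t)) Q (z :: v) +
    \sum_x comp_coef (fun t => P (x :: t) * Q x [:: y; z]) Q v.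
Proof.
rewrite {1}/comp_coef big_nat_recl // sum_tuple0 mulr0 add0r.
rewrite (eq_bigr (fun q =>
    \sum_(t : q.-tuple 'I_N) P (y :: t) * prod_coef Q t (z :: v) +
    \sum_x \sum_(t : q.-tuple 'I_N) P (x :: t) * Q x [:: y; z] * prod_coef Q t v)).
  rewrite big_split /= exchange_big; congr (_ + _); apply: eq_bigr => x _.
  by rewrite (@comp_coef_widen Q Q0 _ _ (size v).+2).
move=> q _; rewrite sum_tupleS.
under eq_bigr do under eq_bigr do rewrite prod_coef_cons2 mulrDr !mulrA.
under eq_bigr do rewrite big_split /=.
rewrite big_split /=; congr (_ + _).
rewrite -(sum_if_eq y (fun x =>
  \sum_(t : q.-tuple 'I_N) P (x :: t) * prod_coef Q t (z :: v))).
apply: eq_bigr => x _; case: (x =P y) => [->|_].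
  by under eq_bigr do rewrite mulr1.
by rewrite big1 // => t _; rewrite mulr0 mul0r.
Qed.

End QuadraticInner.
End Coefficients.

Definition ring_id_laws := (mul0r, mulr0, mul1r, mulr1, add0r, addr0).

Section QuadSeries.

Variables (n : nat) (A : nzRingType) (c : 'I_n.+1 -> A).

Definition quad_series : series_tuple n.+1 A := fun j w =>
  if w == [:: j] then 1 else if w == [:: ord0; j] then c j else 0.

Lemma quad_series_nil j : quad_series j [::] = 0.
Proof. by []. Qed.

Lemma quad_series1 j k : quad_series j [:: k] = (j == k)%:R.
Proof. by rewrite /quad_series !eqseq_cons andbF andbT eq_sym; case: eqP. Qed.

Lemma quad_series2 j l m :
  quad_series j [:: l; m] = if (l == ord0) && (m == j) then c j else 0.
Proof. by rewrite /quad_series !eqseq_cons andbF !andbT. Qed.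

Lemma quad_series_large j w : (2 < size w)%N -> quad_series j w = 0.
Proof.
by move=> w3; rewrite /quad_series !ifN //; apply/eqP => wE; rewrite wE in w3.
Qed.

Lemma Gdif_quad_series : Gdif quad_series.
Proof. by move=> j; split; [apply: quad_series_nil | apply: quad_series1]. Qed.

Lemma subst_quad_series G j v : (forall k, G k [::] = 0) ->
  subst quad_series G j v =
  G j v + c j * \sum_(k < (size v).+1) G ord0 (take k v) * G j (drop k v).
Proof.
move=> G0; rewrite subst_quadratic //; last exact: quad_series_large.
congr (_ + _).
  rewrite -(sum_if_eq j (fun l => G l v)); apply: eq_bigr => l _.
  by rewrite quad_series1 eq_sym; case: (l =P j) => _; rewrite ?mul1r ?mul0r.
rewrite (bigD1 ord0) //= [X in _ + X]big1 ?addr0 => [|l /negbTE l0]; last first.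
  by apply: big1 => m _; rewrite quad_series2 l0 mul0r.
rewrite (bigD1 j) //= [X in _ + X]big1 ?addr0 => [|m /negbTE mj]; last first.
  by rewrite quad_series2 eqxx mj mul0r.
by rewrite quad_series2 !eqxx.
Qed.

Lemma comp_coef_quad_series_ord0 P z v :
  comp_coef P quad_series [:: ord0, z & v] =
  comp_coef (fun t => P (ord0 :: t)) quad_series (z :: v) +
  comp_coef (fun t => P (z :: t) * c z) quad_series v.
Proof.
rewrite comp_coef_cons2 //; [|exact: quad_series1|exact: quad_series_large].
congr (_ + _); rewrite (bigD1 z) //= big1 ?addr0 => [|x /negbTE xz].
  by rewrite quad_series2 !eqxx.
rewrite /comp_coef big1 // => q _; apply: big1 => t _.
by rewrite quad_series2 eqxx eq_sym xz mulr0 mul0r.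
Qed.

Section Inverses.

Variable G : series_tuple n.+1 A.
Hypothesis Gdif_G : Gdif G.

Lemma right_inverse_quad_series j v :
  subst quad_series G = @id_series _ A -> (1 < size v)%N ->
  G j v = - (c j * \sum_(k < (size v).+1) G ord0 (take k v) * G j (drop k v)).
Proof.
move=> right_inv v2; apply/eqP; rewrite -addr_eq0 -subst_quad_series; last first.
  by move=> k; case: (Gdif_G k).
by rewrite right_inv /id_series ifN //; apply/eqP => vj; rewrite vj in v2.
Qed.

Lemma left_inverse_quad_series i : subst G quad_series = @id_series _ A ->
  G i [:: ord0; ord0; ord0; i] + G i [:: ord0; ord0; i] * (c i + c ord0 + c ord0) +
  G i [:: ord0; i] * (c ord0 * c i) = 0.
Proof.
move/(congr1 (fun F => F i [:: ord0; ord0; ord0; i])).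
rewrite /= subst_comp_coef; last by case: (Gdif_G i).
rewrite !comp_coef_quad_series_ord0 !comp_coef_nil !(comp_coef1 quad_series1) /=.
by rewrite /id_series eqseq_cons andbF !mulrDr !addrA mulrA.
Qed.

Lemma quad_series_inverse_comm i :
  subst G quad_series = @id_series _ A -> subst quad_series G = @id_series _ A ->
  c i * (c i * c ord0) = c i * (c ord0 * c i).
Proof.
move=> left_inv right_inv.
have G_nil k : G k [::] = 0 by case: (Gdif_G k).
have G_single k l : G k [:: l] = (k == l)%:R by case: (Gdif_G k).
have Gr j v := @right_inverse_quad_series j v right_inv.
have G0_00 : G ord0 [:: ord0; ord0] = - c ord0.
  by rewrite Gr // !big_ord_recl big_ord0 /= !(G_nil, G_single, eqxx, ring_id_laws).
have G0_000 : G ord0 [:: ord0; ord0; ord0] = c ord0 * (c ord0 + c ord0).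
  rewrite Gr // !big_ord_recl big_ord0 /= !(G_nil, G_single, eqxx, ring_id_laws).
  by rewrite G0_00 -opprD mulrN opprK.
have Gi_0i : G i [:: ord0; i] = - c i.
  by rewrite Gr // !big_ord_recl big_ord0 /= !(G_nil, G_single, eqxx, ring_id_laws).
have Gi_00i : G i [:: ord0; ord0; i] = c i * (c i + c ord0).
  rewrite Gr // !big_ord_recl big_ord0 /= !(G_nil, G_single, eqxx, ring_id_laws).
  by rewrite Gi_0i G0_00 -opprD mulrN opprK.
have Gi_000i : G i [:: ord0; ord0; ord0; i] =
    - (c i * (c i * (c i + c ord0) + (c ord0 * c i + c ord0 * (c ord0 + c ord0)))).
  rewrite Gr // !big_ord_recl big_ord0 /= !(G_nil, G_single, eqxx, ring_id_laws).
  by rewrite Gi_00i Gi_0i G0_00 G0_000 mulrNN.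
have := left_inverse_quad_series i left_inv; rewrite Gi_000i Gi_00i Gi_0i.
rewrite !(mulrDl, mulrDr, mulNr, mulrN, opprD, mulrA) !addrA -!mulrA.
(* Twelve monomials; pair off the ten that cancel. *)
rewrite (ACl ((1*6)*(3*7)*(4*9)*(5*11)*(2*8)*10*12)) /= !addNr !add0r.
exact: subr0_eq.
Qed.

End Inverses.

End QuadSeries.

Theorem corollary5 (N : nat) (hN : (2 <= N)%N) :
  exists (A : algType Cplx) (F : series_tuple N A),
    Gdif F /\
    forall G H : series_tuple N A,
      Gdif G -> Gdif H ->
      subst G F = @id_series N A ->
      subst F H = @id_series N A ->
      G <> H.
Proof.
case: N hN => [|[|n]] // _.
pose a : 'M[Cplx]_2 := delta_mx 0 1; pose b : 'M[Cplx]_2 := delta_mx 0 0.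
exists 'M[Cplx]_2, (quad_series (fun j => if j == ord0 then a else b)).
split=> [|G H Gdif_G _ left_inv right_inv GH]; first exact: Gdif_quad_series.
rewrite -GH in right_inv.
have /= := quad_series_inverse_comm Gdif_G ord_max left_inv right_inv.
rewrite /a /b -!mulmxE !mul_delta_mx mul_delta_mx_0 // mulmx0.
by move/matrixP/(_ 0 1)/(@eqP Cplx); rewrite !mxE oner_eq0.
Qed.
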